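(* Let $\beta>0$, $T>0$, $\lambda>0$, put $M=\beta T$, and let $B_M$ satisfy $0<B_M<\beta T$. Let $T_{\text{th}}=\dfrac{M}{\ln(1+M/\lambda)}$ and, for $x\ge 0$, $$P_{e|1}(x)=\sum_{y\in\mathbb{Z}_{\ge 0},\, y<T_{\text{th}}} e^{-(x+\lambda)}\frac{(x+\lambda)^y}{y!}.$$ Consider the optimization problem over real sequences $\{\Delta_i\}_{i=1}^\infty$: $$\min_{\{\Delta_i\}} \sum_{j=1}^{\infty}\frac{1}{2^{j}}P_{e|1}(M+\Delta_j)\quad\text{s.t.}\quad B_M-\sum_{j=1}^{i}\Delta_j\ge 0\ \text{ and }\ \sum_{j=1}^{i}\Delta_j\ge 0\ \text{ for all } i\ge 1.$$ Then for the optimal solution $\{\Delta^*_i\}_{i=1}^\infty$ there exists an index $J$ such that $\Delta^*_j=0$ for all $j>J$; that is, only finitely many of the optimal increments are positive.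
   Context: This is the ''no-ISI'' adaptive release-duration problem for a molecular transmitter with molecule production rate $\beta$, slot length $T$, storage capacity $B_M=\beta(T-T_M)$; $\Delta_i$ is the increment of the number of released molecules (for bit ''1'') in state $s_{i-1}$. $P_{e|1}(x)$ is the probability that a Poisson$(x+\lambda)$ count falls below the fixed threshold $T_{\text{th}}$. The paper assumes $M\gg\lambda$, so that $T_{\text{th}}<M$. *)

From Stdlib Require Import Reals Factorial.
From Coquelicot Require Import Coquelicot.
Open Scope R_scope.

Definition Tth (M lam : R) : R := M / ln (1 + M / lam).

Definition Pe1 (M lam x : R) : R :=
  Series (fun y : nat =>
    if Rlt_dec (INR y) (Tth M lam)
    then exp (- (x + lam)) * (x + lam) ^ y / INR (Factorial.fact y)
    else 0).

(* Increments are indexed by i >= 1; Delta 0 is unused. *)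
Definition feasible (BM : R) (Delta : nat -> R) : Prop :=
  forall i : nat, (1 <= i)%nat ->
    BM - sum_f_R0 (fun k => Delta (S k)) (i - 1) >= 0 /\
    sum_f_R0 (fun k => Delta (S k)) (i - 1) >= 0.

Definition objective (M lam : R) (Delta : nat -> R) : R :=
  Series (fun k : nat => / 2 ^ (S k) * Pe1 M lam (M + Delta (S k))).

Definition optimal (M lam BM : R) (Delta : nat -> R) : Prop :=
  feasible BM Delta /\
  forall Delta' : nat -> R, feasible BM Delta' ->
    objective M lam Delta <= objective M lam Delta'.

From Stdlib Require Import Reals Lra Lia Classical Factorial Wf_nat.
From Coquelicot Require Import Coquelicot.
Open Scope R_scope.

(* P_{e|1}(x) is the Poisson(x + lam) distribution function at K, the largest integer
   below T_th; its derivative in the mean is -p_K, the Poisson pmf at K. Moving eps of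
   release from slot m to an earlier slot k respects the constraints as long as the partial
   sums in between stay eps below B_M, so by the mean value theorem optimality forces
   2^(m-k) p_K(x1) <= p_K(x2) at intermediate points x1, x2. As p_K is bounded above and
   away from 0 on the relevant range, the partial sums of an optimal sequence reach B_M
   within every window of bounded length. Once at B_M they stay there: a dip followed by
   the next refill could be undone by such a transfer, because the choice of T_th gives
   p_K(lam) >= p_K(M + lam), so p_K on [lam, M + lam] dominates p_K on [M + lam, oo).
   Hence the increments vanish after the first saturation. *)

Lemma ln_le_sub_1 y : 0 < y -> ln y <= y - 1.
Proof. intros Hy. pose proof (exp_ineq1_le (ln y)) as H. rewrite exp_ln in H; lra. Qed.

Lemma first_hit (P : nat -> Prop) k r : (k <= r)%nat -> P r ->
  exists m, (k <= m <= r)%nat /\ P m /\ forall n, (k <= n < m)%nat -> ~ P n.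
Proof.
  revert k. induction r as [r IH] using lt_wf_ind. intros k Hkr Hr.
  destruct (classic (exists n, (k <= n < r)%nat /\ P n)) as [[n [Hn Pn]] | Hnone].
  - destruct (IH n ltac:(lia) k ltac:(lia) Pn) as (m & Hm & Pm & Hfirst).
    exists m. repeat split; auto; lia.
  - exists r. repeat split; auto; try lia.
    intros n Hn Pn. apply Hnone. eauto.
Qed.

Lemma nat_lt_threshold t : 0 < t -> exists K, forall y, INR y < t <-> (y <= K)%nat.
Proof.
  intros Ht. destruct (nfloor_ex t) as [n [_ Hn]]; [lra|].
  destruct (first_hit (fun y => t <= INR y) 0 (S n)) as (m & _ & Htm & Hbelow);
    [lia | rewrite S_INR; lra |].
  destruct m as [|K]; [simpl in Htm; lra|].
  exists K. intros y. split; intros Hy.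
  - destruct (Nat.le_gt_cases y K) as [|HKy]; auto.
    apply le_INR in HKy. lra.
  - apply Rnot_le_lt, Hbelow. lia.
Qed.

Lemma finite_min_pos (f : nat -> R) a n : (forall i, (a <= i < n)%nat -> 0 < f i) ->
  exists e, 0 < e /\ forall i, (a <= i < n)%nat -> e <= f i.
Proof.
  induction n as [|n IH]; intros Hpos.
  - exists 1. split; [lra | intros; lia].
  - destruct IH as [e [He Hle]]; [intros; apply Hpos; lia|].
    destruct (Nat.le_gt_cases a n) as [Han | Hna].
    + exists (Rmin e (f n)). split; [apply Rmin_pos; auto; apply Hpos; lia|].
      intros i Hi. destruct (Nat.eq_dec i n) as [->|]; [apply Rmin_r|].
      eapply Rle_trans; [apply Rmin_l | apply Hle; lia].
    + exists e. split; auto. intros i Hi. apply Hle. lia.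
Qed.

Lemma Series_finite_support (a : nat -> R) N : (forall n, (N < n)%nat -> a n = 0) ->
  Series a = sum_f_R0 a N.
Proof.
  intros Ha. apply is_series_unique, is_series_Reals.
  intros eps Heps. exists N. intros n Hn.
  replace (sum_f_R0 a n) with (sum_f_R0 a N).
  - unfold R_dist. rewrite Rminus_diag, Rabs_R0. exact Heps.
  - induction Hn as [|m Hm IH]; [reflexivity|].
    cbn [sum_f_R0]. rewrite <- IH, (Ha (S m)) by lia. ring.
Qed.

Lemma sum_f_R0_point (c : R) i N : (i <= N)%nat ->
  sum_f_R0 (fun n => if (n =? i)%nat then c else 0) N = c.
Proof.
  intros HiN. induction N as [|N IH].
  - replace i with 0%nat by lia. reflexivity.
  - cbn [sum_f_R0]. destruct (Nat.eqb_spec (S N) i) as [<- | Hne].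
    + rewrite sum_eq_R0; [ring|]. intros n Hn.
      destruct (Nat.eqb_spec n (S N)); [lia | reflexivity].
    + rewrite IH by lia. ring.
Qed.

Lemma sum_f_R0_two_points (f : nat -> R) i j N : (i < j <= N)%nat ->
  (forall n, n <> i -> n <> j -> f n = 0) -> sum_f_R0 f N = f i + f j.
Proof.
  intros Hij Hf.
  rewrite (sum_eq f (fun n => (if (n =? i)%nat then f i else 0) + (if (n =? j)%nat then f j else 0))).
  - rewrite sum_plus, !sum_f_R0_point by lia. reflexivity.
  - intros n _. destruct (Nat.eqb_spec n i), (Nat.eqb_spec n j); subst; try lia; try ring.
    rewrite Hf by assumption. ring.
Qed.

Lemma ex_series_dyadic_bounded (a : nat -> R) C : (forall n, 0 <= a n <= C) ->
  ex_series (fun n => / 2 ^ S n * a n).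
Proof.
  intros Ha.
  apply (@ex_series_le R_AbsRing R_CompleteNormedModule _ (fun n => (/ 2) ^ n * C)).
  - intros n. change norm with Rabs. specialize (Ha n).
    rewrite pow_inv.
    assert (0 < / 2 ^ S n <= / 2 ^ n).
    { split; [apply Rinv_0_lt_compat, pow_lt; lra|].
      apply Rinv_le_contravar; [apply pow_lt; lra|]. simpl. pose proof (pow_lt 2 n). lra. }
    rewrite Rabs_pos_eq by nra. nra.
  - apply ex_series_scal_r, ex_series_geom. rewrite Rabs_pos_eq; lra.
Qed.

Definition poisson_pmf (k : nat) (mu : R) : R := exp (- mu) * mu ^ k / INR (fact k).

Definition poisson_cdf (K : nat) (mu : R) : R := sum_f_R0 (fun k => poisson_pmf k mu) K.

Lemma poisson_pmf_nonneg k mu : 0 <= mu -> 0 <= poisson_pmf k mu.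
Proof.
  intros Hmu. unfold poisson_pmf, Rdiv.
  pose proof (exp_pos (- mu)). pose proof (pow_le mu k Hmu).
  pose proof (Rinv_0_lt_compat _ (INR_fact_lt_0 k)).
  apply Rmult_le_pos; [apply Rmult_le_pos|]; lra.
Qed.

Lemma poisson_cdf_nonneg K mu : 0 <= mu -> 0 <= poisson_cdf K mu.
Proof. intros Hmu. apply cond_pos_sum. intros k. now apply poisson_pmf_nonneg. Qed.

Lemma poisson_cdf_le_1 K mu : 0 <= mu -> poisson_cdf K mu <= 1.
Proof.
  intros Hmu. unfold poisson_cdf, poisson_pmf.
  rewrite (sum_eq _ (fun k => mu ^ k / INR (fact k) * exp (- mu)))
    by (intros; unfold Rdiv; ring).
  rewrite <- scal_sum.
  replace 1 with (exp (- mu) * exp mu) by (rewrite <- exp_plus, Rplus_opp_l; apply exp_0).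
  apply Rmult_le_compat_l; [left; apply exp_pos | now apply exp_ge_taylor].
Qed.

Lemma poisson_pmf_le_1 k mu : 0 <= mu -> poisson_pmf k mu <= 1.
Proof.
  intros Hmu. pose proof (poisson_cdf_le_1 k mu Hmu).
  destruct k as [|k]; unfold poisson_cdf in *; cbn [sum_f_R0] in *; [lra|].
  pose proof (poisson_cdf_nonneg k mu Hmu). unfold poisson_cdf in *. lra.
Qed.

Lemma poisson_pmf_pos k mu : 0 < mu -> 0 < poisson_pmf k mu.
Proof.
  intros Hmu. unfold poisson_pmf, Rdiv.
  pose proof (exp_pos (- mu)). pose proof (pow_lt mu k Hmu).
  pose proof (Rinv_0_lt_compat _ (INR_fact_lt_0 k)).
  apply Rmult_lt_0_compat; [apply Rmult_lt_0_compat|]; lra.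
Qed.

Lemma is_derive_poisson_pmf_S k mu :
  is_derive (poisson_pmf (S k)) mu (poisson_pmf k mu - poisson_pmf (S k) mu).
Proof.
  unfold poisson_pmf. auto_derive; [exact I|].
  change (fact k + k * fact k)%nat with (fact (S k)).
  change (match k with 0%nat => 1 | S _ => INR k + 1 end) with (INR (S k)).
  rewrite fact_simpl, mult_INR, S_INR.
  pose proof (INR_fact_lt_0 k). pose proof (pos_INR k).
  simpl pow. field. lra.
Qed.

Lemma is_derive_poisson_cdf K mu : is_derive (poisson_cdf K) mu (- poisson_pmf K mu).
Proof.
  induction K as [|K IH].
  - unfold poisson_cdf, poisson_pmf; simpl. auto_derive; [exact I|]. field.
  - replace (- poisson_pmf (S K) mu)
      with (- poisson_pmf K mu + (poisson_pmf K mu - poisson_pmf (S K) mu)) by ring.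
    apply (is_derive_plus (poisson_cdf K) (poisson_pmf (S K))).
    + exact IH.
    + apply is_derive_poisson_pmf_S.
Qed.

Lemma poisson_cdf_MVT K a b : a <= b -> exists xi, a <= xi <= b /\
  poisson_cdf K b - poisson_cdf K a = - poisson_pmf K xi * (b - a).
Proof.
  intros Hab.
  destruct (MVT_gen (poisson_cdf K) a b (fun x => - poisson_pmf K x)) as [xi [Hxi Heq]].
  - intros x _. apply is_derive_poisson_cdf.
  - intros x _. apply derivable_continuous_pt. exists (- poisson_pmf K x).
    apply is_derive_Reals, is_derive_poisson_cdf.
  - rewrite Rmin_left, Rmax_right in Hxi by lra. now exists xi.
Qed.

Lemma poisson_pmf_le_of_log_le k u v : 0 < u -> 0 < v ->
  - u + INR k * ln u <= - v + INR k * ln v -> poisson_pmf k u <= poisson_pmf k v.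
Proof.
  intros Hu Hv Hlog. unfold poisson_pmf.
  rewrite <- (Rpower_pow k u Hu), <- (Rpower_pow k v Hv). unfold Rpower.
  rewrite <- !exp_plus. unfold Rdiv.
  apply Rmult_le_compat_r; [left; apply Rinv_0_lt_compat, INR_fact_lt_0|].
  destruct Hlog as [Hlt | ->]; [left; now apply exp_increasing | lra].
Qed.

Lemma poisson_pmf_decreasing k u v : 0 < u -> INR k <= u -> u <= v ->
  poisson_pmf k v <= poisson_pmf k u.
Proof.
  intros Hu Hku Huv. apply poisson_pmf_le_of_log_le; try lra.
  set (q := (v - u) / u).
  assert (Hln : ln v - ln u <= q).
  { rewrite <- ln_div by lra. replace q with (v / u - 1) by (unfold q; field; lra).
    apply ln_le_sub_1, Rdiv_lt_0_compat; lra. }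
  assert (Hq : q * u = v - u) by (unfold q; field; lra).
  assert (0 <= q) by (unfold q; apply Rdiv_le_0_compat; lra).
  pose proof (pos_INR k). nra.
Qed.

Lemma poisson_pmf_increasing k u v : 0 < u -> u <= v -> v <= INR k ->
  poisson_pmf k u <= poisson_pmf k v.
Proof.
  intros Hu Huv Hvk. apply poisson_pmf_le_of_log_le; try lra.
  set (q := (v - u) / v).
  assert (Hln : q <= ln v - ln u).
  { assert (ln u - ln v <= - q); [|lra].
    rewrite <- ln_div by lra. replace (- q) with (u / v - 1) by (unfold q; field; lra).
    apply ln_le_sub_1, Rdiv_lt_0_compat; lra. }
  assert (Hq : q * v = v - u) by (unfold q; field; lra).
  assert (0 <= q) by (unfold q; apply Rdiv_le_0_compat; lra).
  pose proof (pos_INR k). nra.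
Qed.

Lemma poisson_pmf_unimodal k a x b : 0 < a -> a <= x <= b ->
  Rmin (poisson_pmf k a) (poisson_pmf k b) <= poisson_pmf k x.
Proof.
  intros Ha Hx. destruct (Rle_dec (INR k) x).
  - eapply Rle_trans; [apply Rmin_r | apply poisson_pmf_decreasing; lra].
  - eapply Rle_trans; [apply Rmin_l | apply poisson_pmf_increasing; lra].
Qed.

Lemma Tth_pos M lam : 0 < M -> 0 < lam -> 0 < Tth M lam.
Proof.
  intros HM Hlam. unfold Tth. apply Rdiv_lt_0_compat; [exact HM|].
  rewrite <- ln_1. apply ln_increasing; [lra|].
  pose proof (Rdiv_lt_0_compat M lam HM Hlam). lra.
Qed.

Lemma Tth_le_mean M lam : 0 < M -> 0 < lam -> Tth M lam <= M + lam.
Proof.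
  intros HM Hlam. unfold Tth.
  set (L := ln (1 + M / lam)).
  assert (HL : M / (M + lam) <= L).
  { pose proof (ln_le_sub_1 (lam / (M + lam)) ltac:(apply Rdiv_lt_0_compat; lra)) as H.
    replace (lam / (M + lam)) with (/ (1 + M / lam)) in H by (field; lra).
    rewrite ln_Rinv in H by (pose proof (Rdiv_lt_0_compat M lam HM Hlam); lra).
    fold L in H. replace (M / (M + lam)) with (1 - / (1 + M / lam)) by (field; lra). lra. }
  assert (HMl : 0 < M / (M + lam)) by (apply Rdiv_lt_0_compat; lra).
  apply Rle_trans with (M / (M / (M + lam))); [|right; field; lra].
  unfold Rdiv at 1 2. apply Rmult_le_compat_l; [lra|].
  apply Rinv_le_contravar; lra.
Qed.

(* Tth M lam is the k at which p_k(lam) = p_k(M + lam): the maximum-likelihood threshold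
   between the two mean counts. *)
Lemma poisson_pmf_below_threshold M lam k : 0 < M -> 0 < lam -> INR k <= Tth M lam ->
  poisson_pmf k (M + lam) <= poisson_pmf k lam.
Proof.
  intros HM Hlam Hk. apply poisson_pmf_le_of_log_le; try lra.
  assert (HL : ln (M + lam) - ln lam = ln (1 + M / lam)).
  { rewrite <- ln_div by lra. f_equal. field. lra. }
  unfold Tth in Hk.
  assert (HLpos : 0 < ln (1 + M / lam)).
  { rewrite <- ln_1. apply ln_increasing; [lra|].
    pose proof (Rdiv_lt_0_compat M lam HM Hlam). lra. }
  assert (INR k * ln (1 + M / lam) <= M).
  { apply Rmult_le_compat_r with (r := ln (1 + M / lam)) in Hk; [|lra].
    unfold Rdiv in Hk. rewrite Rmult_assoc, Rinv_l in Hk; lra. }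
  nra.
Qed.

Lemma Pe1_poisson_cdf M lam K x : (forall y, INR y < Tth M lam <-> (y <= K)%nat) ->
  Pe1 M lam x = poisson_cdf K (x + lam).
Proof.
  intros HK. unfold Pe1. rewrite (Series_finite_support _ K).
  - apply sum_eq. intros y Hy.
    destruct (Rlt_dec (INR y) (Tth M lam)) as [_ | Hy']; [reflexivity|].
    exfalso. now apply Hy', HK.
  - intros y Hy. destruct (Rlt_dec (INR y) (Tth M lam)) as [Hy' | _]; [|reflexivity].
    apply HK in Hy'. lia.
Qed.

Fixpoint partial_sum (D : nat -> R) (i : nat) : R :=
  match i with
  | O => 0
  | S i' => partial_sum D i' + D (S i')
  end.

Lemma sum_f_R0_partial_sum D i : sum_f_R0 (fun k => D (S k)) i = partial_sum D (S i).
Proof. induction i as [|i IH]; simpl; [ring|]. rewrite IH. simpl. ring. Qed.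

Lemma increment_partial_sum D n : (1 <= n)%nat ->
  D n = partial_sum D n - partial_sum D (n - 1).
Proof.
  intros Hn. destruct n as [|n]; [lia|]. replace (S n - 1)%nat with n by lia. simpl. ring.
Qed.

Lemma feasible_iff_partial_sum_bounds BM D : 0 <= BM ->
  feasible BM D <-> forall i, 0 <= partial_sum D i <= BM.
Proof.
  intros HBM. unfold feasible. split.
  - intros HF [|i]; [simpl; lra|].
    destruct (HF (S i)) as [H1 H2]; [lia|].
    replace (S i - 1)%nat with i in * by lia. rewrite sum_f_R0_partial_sum in *. lra.
  - intros HS i Hi. rewrite sum_f_R0_partial_sum.
    replace (S (i - 1)) with i by lia. specialize (HS i). lra.
Qed.

Definition transfer (D : nat -> R) (k m : nat) (eps : R) (i : nat) : R :=
  if (i =? k)%nat then D i + eps else if (i =? m)%nat then D i - eps else D i.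

Lemma partial_sum_transfer D k m eps : (1 <= k < m)%nat -> forall i,
  partial_sum (transfer D k m eps) i =
  partial_sum D i + (if andb (k <=? i)%nat (i <? m)%nat then eps else 0).
Proof.
  intros Hkm i. induction i as [|i IH].
  - simpl. destruct (Nat.leb_spec k 0); simpl; [lia | ring].
  - simpl. rewrite IH. unfold transfer.
    destruct (Nat.eqb_spec (S i) k), (Nat.eqb_spec (S i) m), (Nat.leb_spec k i),
      (Nat.ltb_spec i m), (Nat.leb_spec k (S i)), (Nat.ltb_spec (S i) m);
      simpl; try lia; lra.
Qed.

Lemma feasible_transfer BM D k m eps : 0 <= BM -> (1 <= k < m)%nat -> 0 <= eps ->
  feasible BM D -> (forall i, (k <= i < m)%nat -> partial_sum D i + eps <= BM) ->
  feasible BM (transfer D k m eps).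
Proof.
  intros HBM Hkm Heps HF Hroom.
  rewrite feasible_iff_partial_sum_bounds in HF |- * by exact HBM.
  intros i. rewrite partial_sum_transfer by exact Hkm. specialize (HF i).
  destruct (Nat.leb_spec k i), (Nat.ltb_spec i m); simpl; try lra.
  specialize (Hroom i ltac:(lia)). lra.
Qed.

Section Optimal_release.

Variables (M lam BM : R) (K : nat) (Delta : nat -> R).
Hypothesis lam_pos : 0 < lam.
Hypothesis BM_pos : 0 < BM.
Hypothesis BM_lt_M : BM < M.
Hypothesis K_threshold : forall y, INR y < Tth M lam <-> (y <= K)%nat.
Hypothesis Delta_optimal : optimal M lam BM Delta.

Lemma increment_bounds D n : feasible BM D -> (1 <= n)%nat -> - BM <= D n <= BM.
Proof.
  intros HF Hn. rewrite feasible_iff_partial_sum_bounds in HF by lra.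
  rewrite (increment_partial_sum D n Hn).
  pose proof (HF n). pose proof (HF (n - 1)%nat). lra.
Qed.

Lemma ex_series_objective D : feasible BM D ->
  ex_series (fun n => / 2 ^ S n * Pe1 M lam (M + D (S n))).
Proof.
  intros HF. apply (ex_series_dyadic_bounded _ 1). intros n.
  rewrite (Pe1_poisson_cdf M lam K _ K_threshold).
  pose proof (increment_bounds D (S n) HF ltac:(lia)).
  split; [apply poisson_cdf_nonneg | apply poisson_cdf_le_1]; lra.
Qed.

Lemma objective_transfer D k m eps : (1 <= k < m)%nat ->
  feasible BM D -> feasible BM (transfer D k m eps) ->
  objective M lam (transfer D k m eps) - objective M lam D =
    / 2 ^ k * (poisson_cdf K (M + lam + D k + eps) - poisson_cdf K (M + lam + D k)) +
    / 2 ^ m * (poisson_cdf K (M + lam + D m - eps) - poisson_cdf K (M + lam + D m)).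
Proof.
  intros Hkm HF HF'. unfold objective.
  rewrite <- Series_minus by (apply ex_series_objective; assumption).
  rewrite (Series_finite_support _ (m - 1)).
  - rewrite (sum_f_R0_two_points _ (k - 1) (m - 1)) by
      (lia || (intros n Hk Hm; unfold transfer;
               destruct (Nat.eqb_spec (S n) k), (Nat.eqb_spec (S n) m); try lia; ring)).
    replace (S (k - 1)) with k by lia. replace (S (m - 1)) with m by lia.
    unfold transfer. rewrite Nat.eqb_refl.
    destruct (Nat.eqb_spec m k); [lia|]. rewrite Nat.eqb_refl.
    rewrite !(Pe1_poisson_cdf M lam K _ K_threshold).
    replace (M + (D k + eps) + lam) with (M + lam + D k + eps) by ring.
    replace (M + D k + lam) with (M + lam + D k) by ring.
    replace (M + (D m - eps) + lam) with (M + lam + D m - eps) by ring.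
    replace (M + D m + lam) with (M + lam + D m) by ring.
    ring.
  - intros n Hn. unfold transfer.
    destruct (Nat.eqb_spec (S n) k), (Nat.eqb_spec (S n) m); try lia. ring.
Qed.

Lemma transfer_first_order k m eps : (1 <= k < m)%nat -> 0 < eps ->
  (forall i, (k <= i < m)%nat -> partial_sum Delta i + eps <= BM) ->
  exists x1 x2,
    M + lam + Delta k <= x1 <= M + lam + Delta k + eps /\
    M + lam + Delta m - eps <= x2 <= M + lam + Delta m /\
    2 ^ (m - k) * poisson_pmf K x1 <= poisson_pmf K x2.
Proof.
  intros Hkm Heps Hroom. destruct Delta_optimal as [HF Hopt].
  assert (HF' : feasible BM (transfer Delta k m eps))
    by (apply feasible_transfer; auto; lra).
  pose proof (Hopt _ HF') as Hle.
  pose proof (objective_transfer Delta k m eps Hkm HF HF') as Hdiff.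
  destruct (poisson_cdf_MVT K (M + lam + Delta k) (M + lam + Delta k + eps))
    as [x1 [Hx1 E1]]; [lra|].
  destruct (poisson_cdf_MVT K (M + lam + Delta m - eps) (M + lam + Delta m))
    as [x2 [Hx2 E2]]; [lra|].
  exists x1, x2. split; [exact Hx1|]. split; [exact Hx2|].
  replace (M + lam + Delta k + eps - (M + lam + Delta k)) with eps in E1 by ring.
  replace (M + lam + Delta m - (M + lam + Delta m - eps)) with eps in E2 by ring.
  assert (Hw : / 2 ^ k = 2 ^ (m - k) * / 2 ^ m).
  { replace m with (k + (m - k))%nat at 2 by lia. rewrite pow_add.
    field. split; apply pow_nonzero; lra. }
  assert (Hwm : 0 < / 2 ^ m) by (apply Rinv_0_lt_compat, pow_lt; lra).
  rewrite E1, Hw in Hdiff.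
  replace (poisson_cdf K (M + lam + Delta m - eps) - poisson_cdf K (M + lam + Delta m))
    with (poisson_pmf K x2 * eps) in Hdiff by lra.
  assert (0 <= / 2 ^ m * eps * (poisson_pmf K x2 - 2 ^ (m - k) * poisson_pmf K x1))
    by nra.
  assert (0 < / 2 ^ m * eps) by nra.
  nra.
Qed.

Lemma poisson_pmf_K_mean_le x : lam <= x <= M + lam ->
  poisson_pmf K (M + lam) <= poisson_pmf K x.
Proof.
  intros Hx.
  assert (Hcross : poisson_pmf K (M + lam) <= poisson_pmf K lam).
  { apply poisson_pmf_below_threshold; try lra. left. apply K_threshold. lia. }
  pose proof (poisson_pmf_unimodal K lam x (M + lam) lam_pos Hx) as Hmin.
  now rewrite Rmin_right in Hmin.
Qed.

Lemma poisson_pmf_K_le_mean x : M + lam <= x -> poisson_pmf K x <= poisson_pmf K (M + lam).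
Proof.
  intros Hx. apply poisson_pmf_decreasing; try lra.
  left. apply Rlt_le_trans with (Tth M lam); [apply K_threshold; lia | apply Tth_le_mean; lra].
Qed.

Lemma partial_sum_reaches_BM k : (1 <= k)%nat ->
  exists r, (k <= r)%nat /\ partial_sum Delta r = BM.
Proof.
  intros Hk. destruct Delta_optimal as [HF _].
  pose proof HF as HS. rewrite feasible_iff_partial_sum_bounds in HS by lra.
  apply NNPP. intros Hnever.
  assert (Hbelow : forall i, (k <= i)%nat -> partial_sum Delta i < BM).
  { intros i Hi. destruct (HS i) as [_ [Hlt | Heq]]; [exact Hlt|]. exfalso; eauto. }
  set (c := Rmin (poisson_pmf K lam) (poisson_pmf K (M + lam + BM))).
  assert (Hc : 0 < c) by (apply Rmin_pos; apply poisson_pmf_pos; lra).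
  destruct (Pow_x_infinity 2 ltac:(rewrite Rabs_pos_eq; lra) (/ c)) as [W HW].
  specialize (HW W (le_n W)). rewrite Rabs_pos_eq in HW by (apply pow_le; lra).
  assert (HcW : 1 <= c * 2 ^ W).
  { apply Rge_le, (Rmult_le_compat_l c) in HW; [|lra]. now rewrite Rinv_r in HW by lra. }
  set (m := (k + S W)%nat).
  destruct (finite_min_pos (fun i => BM - partial_sum Delta i) k m) as [gap [Hgap Hroom]].
  { intros i Hi. specialize (Hbelow i ltac:(lia)). lra. }
  set (eps := Rmin gap lam).
  assert (Heps : 0 < eps <= lam) by (split; [apply Rmin_pos | apply Rmin_r]; lra).
  assert (Heps_gap : eps <= gap) by apply Rmin_l.
  destruct (transfer_first_order k m eps) as (x1 & x2 & Hx1 & Hx2 & Hrate);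
    [lia | lra | intros i Hi; specialize (Hroom i Hi); simpl in Hroom; lra |].
  assert (Hk_room : Delta k + eps <= BM).
  { rewrite (increment_partial_sum Delta k Hk). pose proof (HS (k - 1)%nat).
    specialize (Hroom k ltac:(lia)). simpl in Hroom. lra. }
  pose proof (increment_bounds Delta k HF Hk).
  pose proof (increment_bounds Delta m HF ltac:(lia)).
  assert (Hx1c : c <= poisson_pmf K x1) by (apply poisson_pmf_unimodal; lra).
  assert (Hx2le : poisson_pmf K x2 <= 1) by (apply poisson_pmf_le_1; lra).
  replace (m - k)%nat with (S W) in Hrate by lia. simpl in Hrate.
  pose proof (pow_lt 2 W ltac:(lra)). nra.
Qed.

Lemma partial_sum_stays_BM i : partial_sum Delta i = BM -> partial_sum Delta (S i) = BM.
Proof.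
  intros Hi. destruct Delta_optimal as [HF _].
  pose proof HF as HS. rewrite feasible_iff_partial_sum_bounds in HS by lra.
  apply NNPP. intros Hdrop.
  assert (Hdip : Delta (S i) < 0).
  { destruct (HS (S i)) as [_ [Hlt | Heq]]; [simpl in Hlt; lra | contradiction]. }
  destruct (partial_sum_reaches_BM (S i)) as [r [Hr HrBM]]; [lia|].
  destruct (first_hit (fun n => partial_sum Delta n = BM) (S i) r Hr HrBM)
    as (m & Hm & HmBM & Hbefore).
  assert (Hbelow : forall n, (S i <= n < m)%nat -> partial_sum Delta n < BM).
  { intros n Hn. destruct (HS n) as [_ [Hlt | Heq]]; [exact Hlt|].
    exfalso. exact (Hbefore n Hn Heq). }
  assert (Hkm : (S i < m)%nat).
  { destruct (Nat.eq_dec m (S i)) as [->|]; [contradiction | lia]. }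
  assert (Hrefill : 0 < Delta m).
  { rewrite (increment_partial_sum Delta m) by lia.
    specialize (Hbelow (m - 1)%nat ltac:(lia)). lra. }
  destruct (finite_min_pos (fun n => BM - partial_sum Delta n) (S i) m) as [gap [Hgap Hroom]].
  { intros n Hn. specialize (Hbelow n Hn). lra. }
  set (eps := Rmin gap (Rmin (- Delta (S i)) (Delta m))).
  assert (Heps : 0 < eps) by (apply Rmin_pos; [|apply Rmin_pos]; lra).
  assert (Heps_gap : eps <= gap) by apply Rmin_l.
  assert (Heps_dip : eps <= - Delta (S i)) by (eapply Rle_trans; [apply Rmin_r | apply Rmin_l]).
  assert (Heps_refill : eps <= Delta m) by (eapply Rle_trans; [apply Rmin_r | apply Rmin_r]).
  destruct (transfer_first_order (S i) m eps) as (x1 & x2 & Hx1 & Hx2 & Hrate);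
    [lia | exact Heps | intros n Hn; specialize (Hroom n Hn); simpl in Hroom; lra |].
  pose proof (increment_bounds Delta (S i) HF ltac:(lia)).
  assert (poisson_pmf K (M + lam) <= poisson_pmf K x1) by (apply poisson_pmf_K_mean_le; lra).
  assert (poisson_pmf K x2 <= poisson_pmf K (M + lam)) by (apply poisson_pmf_K_le_mean; lra).
  assert (1 < 2 ^ (m - S i)) by (change 1 with (2 ^ 0); apply Rlt_pow; [lra | lia]).
  pose proof (poisson_pmf_pos K (M + lam) ltac:(lra)). nra.
Qed.

Lemma partial_sum_eventually_BM :
  exists j, forall n, (j <= n)%nat -> partial_sum Delta n = BM.
Proof.
  destruct (partial_sum_reaches_BM 1) as [j [_ Hj]]; [lia|].
  exists j. intros n Hn. induction Hn as [|n _ IH]; [exact Hj|].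
  now apply partial_sum_stays_BM.
Qed.

End Optimal_release.

Theorem lemma2 (beta T lam BM : R) (Delta : nat -> R) :
  0 < beta -> 0 < T -> 0 < lam ->
  0 < BM -> BM < beta * T ->
  optimal (beta * T) lam BM Delta ->
  exists J : nat, forall j : nat, (J < j)%nat -> Delta j = 0.
Proof.
  intros Hbeta HT Hlam HBM HBM_lt Hopt.
  assert (HM : 0 < beta * T) by (apply Rmult_lt_0_compat; assumption).
  destruct (nat_lt_threshold (Tth (beta * T) lam)) as [K HK]; [now apply Tth_pos|].
  destruct (partial_sum_eventually_BM (beta * T) lam BM K Delta Hlam HBM HBM_lt HK Hopt)
    as [J HJ].
  exists J. intros j Hj.
  rewrite (increment_partial_sum Delta j), !HJ by lia. ring.
Qed.
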